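(* Let $f,g$ satisfy the standing assumptions below and suppose $\beta\ge\frac{2M_fQ_g}{\mu^3}$. Then for any $(x,y)\in\mathbb{R}^n\times\mathbb{R}^p$, $0\in\mathcal{D}_h(x,y)$ if and only if $0\in\hat{\mathcal{D}}_p(x,y)$.
   Context: Standing assumptions. (A1) Constants $M_f,\mu,L_g,Q_g>0$ exist such that: $f:\mathbb{R}^n\times\mathbb{R}^p\to\mathbb{R}$ is $M_f$-Lipschitz; $g$ is twice differentiable with $\nabla^2_{yy}g\succeq\mu I_p$; $\nabla g$ is $L_g$-Lipschitz; $\nabla^2_{yy}g,\nabla^2_{xy}g$ are $Q_g$-Lipschitz; $\nabla^2_{yy}g$ is continuously differentiable ($\nabla^2_{xy}g\in\mathbb{R}^{n\times p}$ has entries $\partial^2g/\partial x_i\partial y_j$). (A2) $f$ is a potential function of a conservative field $\mathcal{D}_f$ with compact convex values of norm at most $M_f$. Notation (all at $(x,y)$): $H=\nabla^2_{yy}g$; $\mathcal{A}(x,y):=y-H^{-1}\nabla_yg$; $\nabla^3_{xyy}g(x,y)[d]:=\lim_{t\to0}\frac1t(\nabla^2_{xy}g(x,y+td)-\nabla^2_{xy}g(x,y))$, $\nabla^3_{yyy}g(x,y)[d]:=\lim_{t\to0}\frac1t(\nabla^2_{yy}g(x,y+td)-\nabla^2_{yy}g(x,y))$; $J_{A,x}:=-\nabla^2_{xy}gH^{-1}+\nabla^3_{xyy}g[H^{-1}\nabla_yg]H^{-1}$, $J_{A,y}:=\nabla^3_{yyy}g[H^{-1}\nabla_yg]H^{-1}$;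 $\mathcal{D}_h(x,y):=\{(d_x+J_{A,x}d_y+\beta\nabla^2_{xy}g\nabla_yg,\ J_{A,y}d_y+\beta H\nabla_yg):(d_x,d_y)\in\mathcal{D}_f(x,\mathcal{A}(x,y))\}$; $W(x,y):=[I_n,\ -\nabla^2_{xy}g(x,y)H^{-1}]\in\mathbb{R}^{n\times(n+p)}$; $\hat{\mathcal{D}}_p(x,y):=\{W(x,y)^\top W(x,y)d+(0,\beta\nabla_yg(x,y)):d\in\mathcal{D}_f(x,\mathcal{A}(x,y))\}$. *)

From HB Require Import structures.
From mathcomp Require Import all_boot all_order all_algebra.
From mathcomp Require Import all_classical all_reals all_analysis.
Set Implicit Arguments. Unset Strict Implicit. Unset Printing Implicit Defensive.
Import Order.TTheory GRing.Theory Num.Theory.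
Import numFieldNormedType.Exports.
Local Open Scope classical_set_scope.
Local Open Scope ring_scope.

Section Defs.
Variable R : realType.

Definition inner (m : nat) (u v : 'cV[R]_m) : R := \sum_i u i 0 * v i 0.
Definition enorm (m : nat) (v : 'cV[R]_m) : R := Num.sqrt (inner v v).

Definition evec (m : nat) (k : 'I_m) : 'cV[R]_m := delta_mx k 0.

(* a point (x,y) of R^n x R^p is the column vector col_mx x y : 'cV_(n+p) *)

Definition grad (m : nat) (g : 'cV[R]_m -> R) (z : 'cV[R]_m) : 'cV[R]_m :=
  \col_k ('D_(evec k) g z).

Definition hess (m : nat) (g : 'cV[R]_m -> R) (z : 'cV[R]_m) : 'M[R]_m :=
  \matrix_(k, l) ('D_(evec k) (fun w => grad g w l 0) z).

Variables n p : nat.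
Implicit Types (g : 'cV[R]_(n + p) -> R) (x : 'cV[R]_n) (y : 'cV[R]_p).

Definition grad_y g x y : 'cV[R]_p := dsubmx (grad g (col_mx x y)).
Definition hess_yy g (z : 'cV[R]_(n + p)) : 'M[R]_p := drsubmx (hess g z).
Definition hess_xy g (z : 'cV[R]_(n + p)) : 'M[R]_(n, p) := ursubmx (hess g z).

Definition D3_xyy g x y (d : 'cV[R]_p) : 'M[R]_(n, p) :=
  'D_(col_mx 0 d) (hess_xy g) (col_mx x y).
Definition D3_yyy g x y (d : 'cV[R]_p) : 'M[R]_p :=
  'D_(col_mx 0 d) (hess_yy g) (col_mx x y).

Definition Hinv g x y : 'M[R]_p := invmx (hess_yy g (col_mx x y)).

Definition Amap g x y : 'cV[R]_p := y - Hinv g x y *m grad_y g x y.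

Definition J_Ax g x y : 'M[R]_(n, p) :=
  - (hess_xy g (col_mx x y) *m Hinv g x y)
  + D3_xyy g x y (Hinv g x y *m grad_y g x y) *m Hinv g x y.
Definition J_Ay g x y : 'M[R]_p :=
  D3_yyy g x y (Hinv g x y *m grad_y g x y) *m Hinv g x y.

Definition D_h (Df : 'cV[R]_(n + p) -> set 'cV[R]_(n + p)) g (beta : R) x y
  : set 'cV[R]_(n + p) :=
  [set col_mx
        (usubmx d + J_Ax g x y *m dsubmx d
           + beta *: (hess_xy g (col_mx x y) *m grad_y g x y))
        (J_Ay g x y *m dsubmx d
           + beta *: (hess_yy g (col_mx x y) *m grad_y g x y))
   | d in Df (col_mx x (Amap g x y))].

Definition Wmat g x y : 'M[R]_(n, n + p) :=
  row_mx 1%:M (- (hess_xy g (col_mx x y) *m Hinv g x y)).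

Definition D_p_hat (Df : 'cV[R]_(n + p) -> set 'cV[R]_(n + p)) g (beta : R) x y
  : set 'cV[R]_(n + p) :=
  [set (Wmat g x y)^T *m (Wmat g x y *m d) + col_mx 0 (beta *: grad_y g x y)
   | d in Df (col_mx x (Amap g x y))].

End Defs.

Section Regularity.
Variable R : realType.

Definition lipschitz_with (m : nat) (L : R) (F : 'cV[R]_m -> R) :=
  forall z z', `|F z - F z'| <= L * enorm (z - z').

Definition lipschitz_vec_with (m k : nat) (L : R) (F : 'cV[R]_m -> 'cV[R]_k) :=
  forall z z', enorm (F z - F z') <= L * enorm (z - z').

(* Lipschitz continuity of a matrix-valued map w.r.t. the operator (spectral)
   norm:  ||F z - F z'||_op <= L |z - z'|, written out via the definition of the
   operator norm. *)
Definition lipschitz_mx_with (m a b : nat) (L : R) (F : 'cV[R]_m -> 'M[R]_(a, b)) :=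
  forall z z' (v : 'cV[R]_b),
    enorm ((F z - F z') *m v) <= L * enorm (z - z') * enorm v.

Definition psd_ge (k : nat) (M : 'M[R]_k) (mu : R) :=
  forall v : 'cV[R]_k, inner v (M *m v) >= mu * inner v v.

Definition abs_cont_curve (m : nat) (gamma : R -> 'cV[R]_m) :=
  forall eps : R, 0 < eps -> exists2 delta : R, 0 < delta &
    forall (K : nat) (a b : 'I_K -> R),
      (forall i, 0 <= a i /\ a i <= b i /\ b i <= 1) ->
      (forall i j, i != j -> b i <= a j \/ b j <= a i) ->
      \sum_i (b i - a i) < delta ->
      \sum_i enorm (gamma (b i) - gamma (a i)) < eps.

Local Open Scope ereal_scope.
Definition max_pairing (m : nat) (D : 'cV[R]_m -> set 'cV[R]_m)
  (gamma : R -> 'cV[R]_m) (t : R) : \bar R :=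
  ereal_sup [set (inner (derive1 gamma t) v)%:E | v in D (gamma t)].
Local Close Scope ereal_scope.

(* conservative field (Bolte--Pauwels): closed graph, nonempty compact values,
   and the integral of max_pairing along every absolutely continuous loop is 0 *)
Definition conservative_field (m : nat) (D : 'cV[R]_m -> set 'cV[R]_m) :=
  [/\ closed [set zv : 'cV[R]_m * 'cV[R]_m | D zv.1 zv.2],
      (forall z, D z !=set0),
      (forall z, compact (D z)) &
      (forall gamma : R -> 'cV[R]_m, abs_cont_curve gamma -> gamma 0 = gamma 1 ->
         (\int[lebesgue_measure]_(t in `[0%R, 1%R]) max_pairing D gamma t = 0)%E)].

Definition potential_of (m : nat) (f : 'cV[R]_m -> R) (D : 'cV[R]_m -> set 'cV[R]_m) :=
  forall gamma : R -> 'cV[R]_m, abs_cont_curve gamma ->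
    ((f (gamma 1) - f (gamma 0))%:E =
       \int[lebesgue_measure]_(t in `[0%R, 1%R]) max_pairing D gamma t)%E.

End Regularity.

(* Write r = nabla_y g, H = nabla^2_yy g, t = H^-1 r and s = H^-1 d_y.  The y-block of
   an element of D_h is nabla^3_yyy g[t] s + beta H r.  Strong convexity gives
   |beta H r| >= beta mu |r|, |t| <= |r| / mu and |s| <= M_f / mu, while the
   Q_g-Lipschitz Hessian gives |nabla^3_yyy g[t] s| <= Q_g |t| |s|.  If the block
   vanishes, beta mu^3 |r| <= Q_g M_f |r|, and beta mu^3 > Q_g M_f forces r = 0.
   With r = 0 the third-order terms drop out of J_{A,x}, J_{A,y}, and both
   0 in D_h and 0 in hat D_p reduce to W d = 0, since the x-block of W^T W d is
   W d itself and its y-block is then 0 + beta r. *)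
Set Warnings "-notation-overridden -ambiguous-paths -notation-incompatible-prefix".
From HB Require Import structures.
From mathcomp Require Import all_boot all_order all_algebra.
From mathcomp Require Import all_classical all_reals all_analysis.
From mathcomp Require Import ring lra.
Set Implicit Arguments. Unset Strict Implicit.
Import Order.TTheory GRing.Theory Num.Theory.
Import numFieldNormedType.Exports.
Local Open Scope classical_set_scope.
Local Open Scope ring_scope.

Section Euclidean.
Variables (R : realType) (m : nat).
Implicit Types (u v w : 'cV[R]_m) (H : 'M[R]_m).

Lemma inner_self_ge0 u : 0 <= inner u u.
Proof. by apply: sumr_ge0 => i _; rewrite -expr2 sqr_ge0. Qed.

Lemma inner_self_eq0 u : inner u u = 0 -> u = 0.
Proof.
move=> /psumr_eq0P u0; apply/matrixP => i j; rewrite ord1 mxE.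
have sqr_entry_ge0 k : true -> 0 <= u k 0 * u k 0 by rewrite -expr2 sqr_ge0.
have /eqP := u0 sqr_entry_ge0 i isT.
by rewrite mulf_eq0 orbb => /eqP.
Qed.

Lemma sqr_enorm u : enorm u ^+ 2 = inner u u.
Proof. by rewrite sqr_sqrtr // inner_self_ge0. Qed.

Lemma enorm_ge0 u : 0 <= enorm u.
Proof. exact: sqrtr_ge0. Qed.

Lemma enorm_eq0 u : enorm u = 0 -> u = 0.
Proof.
move=> /eqP; rewrite sqrtr_eq0 => u_le0.
by apply: inner_self_eq0; apply/eqP; rewrite eq_le u_le0 inner_self_ge0.
Qed.

Lemma enormZ (a : R) u : enorm (a *: u) = `|a| * enorm u.
Proof.
have inner_scale : inner (a *: u) (a *: u) = a ^+ 2 * inner u u.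
  by rewrite /inner mulr_sumr; apply: eq_bigr => i _; rewrite !mxE; ring.
by rewrite /enorm inner_scale sqrtrM ?sqr_ge0 // sqrtr_sqr.
Qed.

Lemma enormN u : enorm (- u) = enorm u.
Proof. by rewrite -scaleN1r enormZ normrN1 mul1r. Qed.

Lemma enorm0 : enorm (0 : 'cV[R]_m) = 0.
Proof. by rewrite -(scale0r 0) enormZ normr0 mul0r. Qed.

Lemma inner_young (c : R) v w : 2 * c * inner v w <= c ^+ 2 * inner v v + inner w w.
Proof.
have := inner_self_ge0 (c *: v - w).
have -> : inner (c *: v - w) (c *: v - w) =
          c ^+ 2 * inner v v - 2 * c * inner v w + inner w w.
  rewrite /inner !mulr_sumr -sumrB -big_split /=.
  by apply: eq_bigr => i _; rewrite !mxE; ring.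
lra.
Qed.

Lemma psd_ge_enorm H (mu : R) v :
  0 <= mu -> psd_ge H mu -> mu * enorm v <= enorm (H *m v).
Proof.
move=> mu0 /(_ v) Hv.
rewrite -ler_sqr ?nnegrE ?mulr_ge0 ?enorm_ge0 // exprMn !sqr_enorm.
have := inner_young mu v (H *m v); have := inner_self_ge0 v; nra.
Qed.

Lemma psd_ge_unitmx H (mu : R) : 0 < mu -> psd_ge H mu -> H \in unitmx.
Proof.
move=> mu0 Hmu; rewrite -unitmx_tr unitmxE unitfE.
apply/det0P => -[v /negP v_neq0 vH0]; apply: v_neq0; apply/eqP.
have Hv : H *m v^T = 0 by rewrite -[H]trmxK -trmx_mul vH0 trmx0.
have := psd_ge_enorm v^T (ltW mu0) Hmu; rewrite Hv enorm0 => mu_v.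
have /enorm_eq0 /(congr1 trmx) : enorm v^T = 0.
  by apply/eqP; rewrite eq_le enorm_ge0 andbT -(pmulr_rle0 _ mu0).
by rewrite trmxK trmx0.
Qed.

Lemma psd_ge_invmx_enorm H (mu : R) v :
  0 < mu -> psd_ge H mu -> mu * enorm (invmx H *m v) <= enorm v.
Proof.
move=> mu0 Hmu; have := psd_ge_enorm (invmx H *m v) (ltW mu0) Hmu.
by rewrite mulmxA mulmxV ?mul1mx // (psd_ge_unitmx mu0 Hmu).
Qed.

Lemma continuous_enorm_mulmx a (u : 'cV[R]_a) :
  continuous (fun M : 'M[R]_(m, a) => enorm (M *m u)).
Proof.
have entry i : continuous (fun M : 'M[R]_(m, a) => (M *m u) i 0).
  have -> : (fun M : 'M[R]_(m, a) => (M *m u) i 0) =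
            (fun M => \sum_j M i j * u j 0).
    by apply/funext => M; rewrite mxE.
  apply: continuous_big => [|j _ M]; first exact: add_continuous.
  by apply: continuousM => //; [exact: coord_continuous | exact: cst_continuous].
rewrite /enorm => M.
have inner_cont : {for M, continuous (fun N : 'M[R]_(m, a) => inner (N *m u) (N *m u))}.
  apply: continuous_big => [|i _ N]; first exact: add_continuous.
  exact: (continuousM (entry i N) (entry i N)).
exact: (continuous_comp inner_cont (@sqrt_continuous R _)).
Qed.
End Euclidean.

Lemma enorm_col_mx0 (R : realType) n p (t : 'cV[R]_p) :
  enorm (col_mx (0 : 'cV[R]_n) t) = enorm t.
Proof.
rewrite /enorm /inner big_split_ord /= big1 ?add0r => [|i _]; last first.
  by rewrite col_mxEu mxE mul0r.
by congr Num.sqrt; apply: eq_bigr => i _; rewrite col_mxEd.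
Qed.

Lemma enorm_dsubmx (R : realType) n p (d : 'cV[R]_(n + p)) :
  enorm (dsubmx d) <= enorm d.
Proof.
rewrite ler_sqrt ?inner_self_ge0 // [X in _ <= X]/inner big_split_ord /=.
have -> : inner (dsubmx d) (dsubmx d) = \sum_(i < p) d (rshift n i) 0 * d (rshift n i) 0.
  by apply: eq_bigr => i _; rewrite !mxE.
by rewrite lerDr; apply: sumr_ge0 => i _; rewrite -expr2 sqr_ge0.
Qed.

Lemma derive_lipschitz_mx_le (R : realType) m a b (F : 'cV[R]_m -> 'M[R]_(a, b))
    (Q : R) z v (u : 'cV[R]_b) :
  lipschitz_mx_with Q F -> derivable F z v ->
  enorm ('D_v F z *m u) <= Q * enorm v * enorm u.
Proof.
move=> FQ Fv.
have quotient_cvg : (fun h => h^-1 *: (F (h *: v + z) - F z)) @ 0^' --> 'D_v F z.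
  exact: Fv.
have norm_cvg := cvg_comp _ _ quotient_cvg (@continuous_enorm_mulmx R a b u _).
rewrite -(cvg_lim _ norm_cvg) //; apply: limr_le; first exact: cvgP norm_cvg.
near=> h; have h_neq0 : h != 0 by near: h; exact: nbhs_dnbhs_neq.
rewrite /= -scalemxAl enormZ normfV ler_pdivrMl ?normr_gt0 //.
apply: le_trans (FQ (h *: v + z) z u) _.
by rewrite addrK enormZ mulrA (mulrC Q) -!mulrA.
Unshelve. all: by end_near.
Qed.

Section Bilevel.
Variables (R : realType) (n p : nat) (g : 'cV[R]_(n + p) -> R).
Variables (x : 'cV[R]_n) (y : 'cV[R]_p).
Local Notation z := (col_mx x y).
Local Notation r := (grad_y g x y).

Lemma J_Ax_grad_y0 : r = 0 -> J_Ax g x y = - (hess_xy g z *m Hinv g x y).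
Proof. by move=> r0; rewrite /J_Ax /D3_xyy r0 mulmx0 col_mx0 derive0 mul0mx addr0. Qed.

Lemma J_Ay_grad_y0 : r = 0 -> J_Ay g x y = 0.
Proof. by move=> r0; rewrite /J_Ay /D3_yyy r0 mulmx0 col_mx0 derive0 mul0mx. Qed.

Lemma Wmat_mulmx (d : 'cV[R]_(n + p)) :
  Wmat g x y *m d = usubmx d - hess_xy g z *m Hinv g x y *m dsubmx d.
Proof. by rewrite -{1}(vsubmxK d) /Wmat mul_row_col mul1mx mulNmx. Qed.

Lemma D_h_point_grad_y0 (beta : R) (d : 'cV[R]_(n + p)) : r = 0 ->
  col_mx (usubmx d + J_Ax g x y *m dsubmx d + beta *: (hess_xy g z *m r))
         (J_Ay g x y *m dsubmx d + beta *: (hess_yy g z *m r))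
  = col_mx (Wmat g x y *m d) 0.
Proof.
move=> r0; rewrite J_Ax_grad_y0 // J_Ay_grad_y0 // r0 Wmat_mulmx.
by rewrite !mulmx0 !scaler0 !addr0 mul0mx mulNmx.
Qed.

Lemma D_p_hat_point_eq0 (beta : R) (d : 'cV[R]_(n + p)) : beta != 0 ->
  (Wmat g x y)^T *m (Wmat g x y *m d) + col_mx 0 (beta *: r) = 0 <->
  Wmat g x y *m d = 0 /\ r = 0.
Proof.
move=> beta_neq0; rewrite {1}/Wmat tr_row_mx mul_col_mx add_col_mx -col_mx0.
split=> [/eq_col_mx [] | [-> ->]]; last by rewrite !mulmx0 !scaler0 !addr0.
rewrite trmx1 mul1mx addr0 => ->; rewrite mulmx0 add0r => /eqP.
by rewrite scaler_eq0 (negbTE beta_neq0) => /eqP ->.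
Qed.

Lemma grad_y_eq0_of_D_h_ypart (mu Q M beta : R) (d : 'cV[R]_(n + p)) :
  0 < mu -> 0 <= Q -> Q * M < beta * mu ^+ 3 ->
  psd_ge (hess_yy g z) mu -> lipschitz_mx_with Q (hess_yy g) ->
  differentiable (hess_yy g) z -> enorm d <= M ->
  J_Ay g x y *m dsubmx d + beta *: (hess_yy g z *m r) = 0 -> r = 0.
Proof.
rewrite /J_Ay => mu0 Q0 step Hmu HQ Hdiff Md.
set t := Hinv g x y *m r; set s := Hinv g x y *m dsubmx d.
rewrite -mulmxA -/s => /eqP; rewrite addr_eq0 => /eqP D3E.
have lower : `|beta| * mu * enorm r <= enorm (D3_yyy g x y t *m s).
  by rewrite D3E enormN enormZ -mulrA ler_wpM2l // psd_ge_enorm // ltW.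
have upper : enorm (D3_yyy g x y t *m s) <= Q * enorm t * enorm s.
  rewrite -[enorm t](enorm_col_mx0 n); apply: derive_lipschitz_mx_le HQ _.
  exact: diff_derivable.
have Ht : mu * enorm t <= enorm r by exact: psd_ge_invmx_enorm.
have Hs : mu * enorm s <= M.
  by apply: le_trans (psd_ge_invmx_enorm _ mu0 Hmu) (le_trans (enorm_dsubmx d) Md).
have absorb : `|beta| * mu ^+ 3 * enorm r <= Q * M * enorm r.
  have -> : `|beta| * mu ^+ 3 * enorm r = mu ^+ 2 * (`|beta| * mu * enorm r) by ring.
  apply: le_trans (_ : mu ^+ 2 * (Q * enorm t * enorm s) <= _).
    by apply: ler_wpM2l (le_trans lower upper); rewrite sqr_ge0.
  have -> : mu ^+ 2 * (Q * enorm t * enorm s) = Q * ((mu * enorm t) * (mu * enorm s)).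
    by ring.
  have -> : Q * M * enorm r = Q * (enorm r * M) by ring.
  by apply: (ler_wpM2l Q0); apply: ler_pM => //; rewrite mulr_ge0 ?enorm_ge0 ?ltW.
have gap : 0 < `|beta| * mu ^+ 3 - Q * M.
  rewrite subr_gt0; apply: lt_le_trans step _.
  by apply: ler_wpM2r; [rewrite exprn_ge0 // ltW | exact: ler_norm].
apply: enorm_eq0; apply/eqP; rewrite eq_le enorm_ge0 andbT.
by rewrite -(pmulr_rle0 _ gap) mulrBl subr_le0.
Qed.

End Bilevel.

Theorem proposition4p7 (R : realType) (n p : nat)
  (f g : 'cV[R]_(n + p) -> R) (Df : 'cV[R]_(n + p) -> set 'cV[R]_(n + p))
  (M_f mu L_g Q_g beta : R) :
  (* (A1) *)
  0 < M_f -> 0 < mu -> 0 < L_g -> 0 < Q_g ->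
  lipschitz_with M_f f ->
  (forall z, differentiable g z) ->
  (forall z, differentiable (grad g) z) ->
  (forall z, psd_ge (hess_yy g z) mu) ->
  lipschitz_vec_with L_g (grad g) ->
  lipschitz_mx_with Q_g (hess_yy g) ->
  lipschitz_mx_with Q_g (hess_xy g) ->
  (forall z, differentiable (hess_yy g) z) ->
  (forall v : 'cV[R]_(n + p), continuous (fun z => 'D_v (hess_yy g) z)) ->
  (* (A2) *)
  conservative_field Df ->
  potential_of f Df ->
  (forall z, convex_set (Df z : set (convex_lmodType 'cV[R]_(n + p)))) ->
  (forall z d, Df z d -> enorm d <= M_f) ->
  (* step size *)
  2 * M_f * Q_g / mu ^+ 3 <= beta ->
  forall (x : 'cV[R]_n) (y : 'cV[R]_p),
    D_h Df g beta x y 0 <-> D_p_hat Df g beta x y 0.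
Proof.
move=> M_f0 mu0 _ Q_g0 _ _ _ Hpsd _ Hyy_lip _ Hyy_diff _ _ _ _ Df_bounded Hbeta x y.
have mu30 : 0 < mu ^+ 3 by rewrite exprn_gt0.
have beta0 : 0 < beta.
  by apply: lt_le_trans Hbeta; rewrite divr_gt0 // !mulr_gt0.
have step : Q_g * M_f < beta * mu ^+ 3.
  rewrite ler_pdivrMr // in Hbeta; apply: lt_le_trans Hbeta.
  by rewrite mulrC -mulrA ltr_pMl // ?mulr_gt0 // ltr1n.
split=> -[d Dd E]; exists d => //.
- move/eqP: (E); rewrite col_mx_eq0 => /andP [_ /eqP E_y].
  have r0 := grad_y_eq0_of_D_h_ypart mu0 (ltW Q_g0) step (Hpsd _) Hyy_lip
               (Hyy_diff _) (Df_bounded _ _ Dd) E_y.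
  move/eqP: E; rewrite D_h_point_grad_y0 // col_mx_eq0 => /andP [/eqP Wd0 _].
  exact/(D_p_hat_point_eq0 _ _ _ d (lt0r_neq0 beta0)).
- have [Wd0 r0] := (D_p_hat_point_eq0 _ _ _ d (lt0r_neq0 beta0)).1 E.
  by rewrite D_h_point_grad_y0 // Wd0 col_mx0.
Qed.
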